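(* Let $p:Y\to Z$ be a quandle covering and $p_*:\mathrm{As}(Y)\to\mathrm{As}(Z)$ the induced surjection ($e_y\mapsto e_{p(y)}$). Then $p_*$ is a central extension. Moreover, if $Y$ and $Z$ are connected and $Z$ is of type $t_Z<\infty$, then $\mathrm{Ker}(p_* )$ is annihilated by $t_Z$.
   Context: A quandle is a set $X$ with a binary operation $\lhd$ such that $a\lhd a=a$, each $x\mapsto x\lhd a$ is bijective, and $(a\lhd b)\lhd c=(a\lhd c)\lhd(b\lhd c)$. A quandle homomorphism $f$ satisfies $f(a\lhd b)=f(a)\lhd f(b)$. A quandle covering is a surjective quandle homomorphism $p:Y\to Z$ such that $p(\tilde x)=p(\tilde y)$ implies $\tilde a\lhd\tilde x=\tilde a\lhd\tilde y$ for all $\tilde a,\tilde x,\tilde y\in Y$. The adjoint group $\mathrm{As}(X)$ has generators $e_x$ and relations $e_{x\lhd y}=e_y^{-1}e_xe_y$; it acts on $X$ by $x\cdot e_y=x\lhd y$, and $X$ is connected if this action is transitive. The type $t_Z$ is the smallest positive $N$ with $x\lhd^N y=x$ for all $x,y\in Z$ ($N$-fold application of $\bullet\lhd y$). *)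

From mathcomp Require Import all_boot.
Set Implicit Arguments. Unset Strict Implicit. Unset Printing Implicit Defensive.

Record quandle := Quandle {
  qcar :> Type;
  qop : qcar -> qcar -> qcar;
  qop_idem : forall a, qop a a = a;
  qop_bij : forall a, bijective (fun x => qop x a);
  qop_rdist : forall a b c, qop (qop a b) c = qop (qop a c) (qop b c)
}.

Notation "a <| b" := (qop a b) (at level 40, left associativity).

Definition quandle_hom (X Y : quandle) (f : X -> Y) : Prop :=
  forall a b, f (a <| b) = f a <| f b.

Definition quandle_covering (Y Z : quandle) (p : Y -> Z) : Prop :=
  quandle_hom p /\ (forall z, exists y, p y = z) /\
  (forall a x y : Y, p x = p y -> a <| x = a <| y).

(* Words in the generators e_x (true) and their inverses e_x^{-1} (false). *)
Definition word (X : quandle) := seq (X * bool).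

(* Equality in As(X): the smallest congruence on words containing the free
   group relations and e_{x<|y} = e_y^{-1} e_x e_y. *)
Inductive as_eq (X : quandle) : word X -> word X -> Prop :=
| as_refl w : as_eq w w
| as_sym w v : as_eq w v -> as_eq v w
| as_trans w v u : as_eq w v -> as_eq v u -> as_eq w u
| as_cat w1 w2 v1 v2 : as_eq w1 v1 -> as_eq w2 v2 -> as_eq (w1 ++ w2) (v1 ++ v2)
| as_inv_r x : as_eq [:: (x, true); (x, false)] [::]
| as_inv_l x : as_eq [:: (x, false); (x, true)] [::]
| as_rel x y : as_eq [:: (x <| y, true)] [:: (y, false); (x, true); (y, true)].

(* Right action of As(X) on X: x . e_y = x <| y, x . e_y^{-1} = the unique z
   with z <| y = x. [as_act w x z] means x . w = z. *)
Inductive as_act (X : quandle) : word X -> X -> X -> Prop :=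
| act_nil x : as_act [::] x x
| act_pos y w x z : as_act w (x <| y) z -> as_act ((y, true) :: w) x z
| act_neg y w x x' z : x' <| y = x -> as_act w x' z -> as_act ((y, false) :: w) x z.

Definition connected (X : quandle) : Prop :=
  forall x z : X, exists w : word X, as_act w x z.

Definition pstar (Y Z : quandle) (p : Y -> Z) (w : word Y) : word Z :=
  map (fun l => (p l.1, l.2)) w.

Definition in_ker (Y Z : quandle) (p : Y -> Z) (w : word Y) : Prop :=
  as_eq (pstar p w) [::].

Definition is_type (Z : quandle) (t : nat) : Prop :=
  0 < t /\ (forall x y : Z, iter t (fun a => a <| y) x = x) /\
  (forall N, 0 < N -> (forall x y : Z, iter N (fun a => a <| y) x = x) -> t <= N).

From Stdlib Require Import Setoid Morphisms ClassicalEpsilon.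
From mathcomp Require Import all_boot.
Set Implicit Arguments. Unset Strict Implicit. Unset Printing Implicit Defensive.

(** The action of As(Z) on Z lifts along the covering to an action on Y
    (e_z acts as any e_y with p y = z), and w acts on Y through p_* w; so a
    kernel element w fixes every a, whence e_a w = w e_a by the conjugation
    rule and w is central.

    For the torsion bound, e_y^t acts on Y as a map f over the identity of Z
    with f (a <| b) = f a <| b and f y = y; by connectedness f = id, so
    e_y^t is central, and then all e_y^t coincide since Y is connected.  For
    p c = p a the kernel element e_c^-1 e_a therefore has t-th power
    e_c^-t e_a^t = 1.  Modulo the central t-torsion words these elements
    generate, every w equals the lift of p_* w along a section of p, and the
    lift respects the relations of As(Z); so a kernel element is central
    t-torsion itself. *)

#[export] Instance as_eq_Equivalence (X : quandle) : Equivalence (@as_eq X).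
Proof. split; [exact: as_refl | exact: as_sym | exact: as_trans]. Qed.

#[export] Instance cat_as_eq_Proper (X : quandle) :
  Proper (@as_eq X ==> @as_eq X ==> @as_eq X) cat.
Proof. by move=> ? ? H ? ? H'; apply: as_cat. Qed.

#[export] Instance cons_as_eq_Proper (X : quandle) :
  Proper (eq ==> @as_eq X ==> @as_eq X) cons.
Proof. by move=> l _ <- u v H; apply: (as_cat (as_refl [:: l]) H). Qed.

#[export] Hint Resolve as_refl : core.

Section AdjointGroup.

Variable X : quandle.
Implicit Types (u v w g k : word X) (x y a b : X).

Lemma letter_mulV x s : as_eq [:: (x, s); (x, ~~ s)] [::].
Proof. by case: s; [apply: as_inv_r | apply: as_inv_l]. Qed.

Fixpoint word_inv w : word X :=
  if w is (x, s) :: w' then word_inv w' ++ [:: (x, ~~ s)] else [::].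

Lemma cat_Vword w : as_eq (word_inv w ++ w) [::].
Proof.
elim: w => [|[x s] w IH] //=.
have -> : (word_inv w ++ [:: (x, ~~ s)]) ++ (x, s) :: w =
          word_inv w ++ ([:: (x, ~~ s); (x, s)] ++ w) by rewrite -catA.
by rewrite -{2}[s]negbK letter_mulV.
Qed.

Lemma as_eq_cat2l g u v : as_eq (g ++ u) (g ++ v) -> as_eq u v.
Proof.
by move=> H; rewrite -[u]cat0s -[v]cat0s -(cat_Vword g) -!catA H.
Qed.

Definition central w := forall u, as_eq (w ++ u) (u ++ w).

Lemma central_pos_letters w :
  (forall x, as_eq (w ++ [:: (x, true)]) ((x, true) :: w)) -> central w.
Proof.
move=> Hpos.
have Hneg x : as_eq (w ++ [:: (x, false)]) ((x, false) :: w).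
  apply: (@as_eq_cat2l [:: (x, true)]).
  change (as_eq (((x, true) :: w) ++ [:: (x, false)])
                ([:: (x, true); (x, false)] ++ w)).
  by rewrite letter_mulV -Hpos -catA /= letter_mulV cats0.
elim=> [|[x s] u IH]; first by rewrite cats0.
rewrite -cat1s catA; case: s; [rewrite Hpos | rewrite Hneg].
all: by rewrite /= IH.
Qed.

Lemma central_cat u v : central u -> central v -> central (u ++ v).
Proof. by move=> Hu Hv w; rewrite -catA Hv catA Hu catA. Qed.

Definition wpow w n := flatten (nseq n w).

Lemma wpowS w n : wpow w n.+1 = w ++ wpow w n.
Proof. by []. Qed.

Lemma wpow_nil n : wpow [::] n = [::].
Proof. by elim: n. Qed.

Lemma wpow_cat_central u k n :
  central k -> as_eq (wpow (u ++ k) n) (wpow u n ++ wpow k n).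
Proof.
move=> Hk; elim: n => //= n IH.
by rewrite !wpowS IH -catA (catA k) Hk -!catA.
Qed.

Lemma as_rel_pos x y :
  as_eq [:: (x, true); (y, true)] [:: (y, true); (x <| y, true)].
Proof.
change (as_eq [:: (x, true); (y, true)] ([:: (y, true)] ++ [:: (x <| y, true)])).
rewrite as_rel.
change (as_eq [:: (x, true); (y, true)]
              ([:: (y, true); (y, false)] ++ [:: (x, true); (y, true)])).
by rewrite as_inv_r.
Qed.

Lemma as_rel_neg x y :
  as_eq [:: (x <| y, true); (y, false)] [:: (y, false); (x, true)].
Proof.
change (as_eq ([:: (x <| y, true)] ++ [:: (y, false)]) [:: (y, false); (x, true)]).
rewrite as_rel.
change (as_eq ([:: (y, false); (x, true)] ++ [:: (y, true); (y, false)])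
              [:: (y, false); (x, true)]).
by rewrite as_inv_r cats0.
Qed.

Lemma as_act_conj g a b :
  as_act g a b -> as_eq ((a, true) :: g) (g ++ [:: (b, true)]).
Proof.
elim=> {g a b} [//|y w x z _ IH|y w x x' z <- _ IH].
- change (as_eq ([:: (x, true); (y, true)] ++ w) ((y, true) :: w ++ [:: (z, true)])).
  by rewrite as_rel_pos /= IH.
- change (as_eq ([:: (x' <| y, true); (y, false)] ++ w)
                ((y, false) :: w ++ [:: (z, true)])).
  by rewrite as_rel_neg /= IH.
Qed.

Lemma as_act_conj_wpow g a b n :
  as_act g a b -> as_eq (wpow [:: (a, true)] n ++ g) (g ++ wpow [:: (b, true)] n).
Proof.
move=> H; elim: n => [|n IH]; first by rewrite cats0.
by rewrite !wpowS -catA IH /= -cat_cons (as_act_conj H) -catA.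
Qed.

Lemma as_act_iter y n a :
  as_act (wpow [:: (y, true)] n) a (iter n (fun x => x <| y) a).
Proof.
elim: n a => [|n IH] a; first exact: act_nil.
by rewrite wpowS iterSr; apply: act_pos.
Qed.

Lemma qop_bij_sig y :
  {g : X -> X | cancel (fun x => x <| y) g /\ cancel g (fun x => x <| y)}.
Proof.
apply: constructive_indefinite_description.
by have [g h1 h2] := qop_bij y; exists g.
Qed.

Definition rinv y : X -> X := sval (qop_bij_sig y).

Lemma rinvK y x : rinv y x <| y = x.
Proof. exact: (proj2 (svalP (qop_bij_sig y)) x). Qed.

Lemma qopK y x : rinv y (x <| y) = x.
Proof. exact: (proj1 (svalP (qop_bij_sig y)) x). Qed.

Lemma iter_qop_rdist y n a b :
  iter n (fun x => x <| y) (a <| b) =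
  iter n (fun x => x <| y) a <| iter n (fun x => x <| y) b.
Proof. by elim: n => //= n ->; rewrite qop_rdist. Qed.

Lemma iter_qop_idem y n : iter n (fun x => x <| y) y = y.
Proof. by elim: n => //= n ->; rewrite qop_idem. Qed.

End AdjointGroup.

Arguments central {X}.
Arguments wpow {X}.

#[export] Instance wpow_Proper (X : quandle) :
  Proper (@as_eq X ==> eq ==> @as_eq X) wpow.
Proof. by move=> w v H _ n ->; elim: n => //= n IH; rewrite !wpowS; apply: as_cat. Qed.

Lemma hom_iter_qop (Y Z : quandle) (p : Y -> Z) (y : Y) n a :
  quandle_hom p ->
  p (iter n (fun x => x <| y) a) = iter n (fun x => x <| p y) (p a).
Proof. by move=> hom; elim: n => //= n <-; rewrite hom. Qed.

Lemma surj_section (Y Z : Type) (p : Y -> Z) :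
  (forall z, exists y, p y = z) -> {l : Z -> Y | cancel l p}.
Proof.
move=> surj.
exists (fun z => sval (constructive_indefinite_description _ (surj z))).
by move=> z; case: constructive_indefinite_description.
Qed.

Lemma pstar_cancel (Y Z : quandle) (p : Y -> Z) (l : Z -> Y) :
  cancel l p -> cancel (pstar l) (pstar p).
Proof. by move=> lK; elim=> [|[z s] v IH] //=; rewrite lK IH. Qed.

Section Covering.

Variables (Y Z : quandle) (p : Y -> Z) (l : Z -> Y).
Hypothesis p_hom : quandle_hom p.
Hypothesis p_cov : forall a x y : Y, p x = p y -> a <| x = a <| y.
Hypothesis lK : cancel l p.

Fixpoint cov_act (v : word Z) (a : Y) : Y :=
  if v is (z, s) :: v' then cov_act v' (if s then a <| l z else rinv (l z) a)
  else a.

Lemma cov_act_cat v1 v2 a : cov_act (v1 ++ v2) a = cov_act v2 (cov_act v1 a).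
Proof. by elim: v1 a => [|[z s] v IH] a //=. Qed.

Lemma cov_act_as_eq v v' : as_eq v v' -> forall a, cov_act v a = cov_act v' a.
Proof.
elim=> {v v'} /=.
- by [].
- by move=> w v _ IH a; rewrite IH.
- by move=> w v u _ IH1 _ IH2 a; rewrite IH1 IH2.
- by move=> w1 w2 v1 v2 _ IH1 _ IH2 a; rewrite !cov_act_cat IH1 IH2.
- by move=> x a; rewrite qopK.
- by move=> x a; rewrite rinvK.
- by move=> x y a; rewrite qop_rdist rinvK; apply: p_cov; rewrite p_hom !lK.
Qed.

Lemma as_act_cov_act (w : word Y) a : as_act w a (cov_act (pstar p w) a).
Proof.
elim: w a => [|[y [|]] w IH] a /=; first exact: act_nil.
- by apply: act_pos; rewrite (p_cov a (lK (p y))); apply: IH.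
- apply: (act_neg (x' := rinv (l (p y)) a)); last exact: IH.
  by rewrite -[in RHS](rinvK (l (p y)) a); apply: p_cov; rewrite lK.
Qed.

Lemma ker_central (w : word Y) : in_ker p w -> central w.
Proof.
move=> Hk; apply: central_pos_letters => a; symmetry.
have := as_act_conj (as_act_cov_act w a).
by rewrite (cov_act_as_eq Hk a).
Qed.

Section Torsion.

Variable t : nat.
Hypothesis Y_connected : connected Y.
Hypothesis t_annihilates_Z : forall x y : Z, iter t (fun a => a <| y) x = x.

Lemma iter_qop_type_id (y a : Y) : iter t (fun x => x <| y) a = a.
Proof.
set f := iter t (fun x => x <| y).
have f_lifts b : p (f b) = p b by rewrite /f hom_iter_qop // t_annihilates_Z.
have f_qop b c : f (b <| c) = f b <| c by rewrite /f iter_qop_rdist; apply: p_cov.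
have fix_act g b c : as_act g b c -> f b = b -> f c = c.
  elim=> {g b c} [//|y' w x z _ IH|y' w x x' z <- _ IH] Hf; apply: IH.
  - by rewrite f_qop Hf.
  - by apply: (bij_inj (qop_bij y')); rewrite /= -f_qop Hf.
have [g Hg] := Y_connected y a.
exact: (fix_act _ _ _ Hg (iter_qop_idem y t)).
Qed.

Lemma central_wpow_letter (y : Y) : central (wpow [:: (y, true)] t).
Proof.
apply: central_pos_letters => a; symmetry.
by have := as_act_conj (as_act_iter y t a); rewrite iter_qop_type_id.
Qed.

Lemma wpow_letter_indep (y y' : Y) :
  as_eq (wpow [:: (y, true)] t) (wpow [:: (y', true)] t).
Proof.
have [g Hg] := Y_connected y y'.
apply: (@as_eq_cat2l _ g).
by rewrite -(central_wpow_letter y g) (as_act_conj_wpow t Hg).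
Qed.

Definition tcentral (s : word Y) := central s /\ as_eq (wpow s t) [::].

Lemma tcentral_nil : tcentral [::].
Proof. by split; [move=> u; rewrite cats0 | rewrite wpow_nil]. Qed.

Lemma tcentral_cat s1 s2 : tcentral s1 -> tcentral s2 -> tcentral (s1 ++ s2).
Proof.
move=> [c1 e1] [c2 e2]; split; first exact: central_cat.
by rewrite wpow_cat_central // e1 e2.
Qed.

Lemma tcentral_fiber (a c : Y) : p c = p a -> tcentral [:: (c, false); (a, true)].
Proof.
move=> Hca.
have k_central : central [:: (c, false); (a, true)].
  by apply: ker_central; rewrite /in_ker /= Hca; apply: as_inv_l.
split=> //; apply: (@as_eq_cat2l _ (wpow [:: (c, true)] t)).
rewrite -wpow_cat_central //= cats0 (wpow_letter_indep c a).
by rewrite -[[:: _, _ & _]]/([:: (c, true); (c, false)] ++ [:: (a, true)]) letter_mulV.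
Qed.

Definition tc_eq (u v : word Y) :=
  exists s1 s2, [/\ tcentral s1, tcentral s2 & as_eq (u ++ s1) (v ++ s2)].

Lemma as_eq_tc_eq u v : as_eq u v -> tc_eq u v.
Proof. by move=> H; exists [::], [::]; split; rewrite ?cats0 //; apply: tcentral_nil. Qed.

Lemma tc_eq_sym u v : tc_eq u v -> tc_eq v u.
Proof. by move=> [s1 [s2 [t1 t2 H]]]; exists s2, s1; split; rewrite ?H. Qed.

Lemma tc_eq_trans u v w : tc_eq u v -> tc_eq v w -> tc_eq u w.
Proof.
move=> [s1 [s2 [t1 t2 H]]] [s3 [s4 [t3 t4 H']]].
exists (s1 ++ s3), (s4 ++ s2); split; try exact: tcentral_cat.
by rewrite catA H -catA (proj1 t2 s3) catA H' catA.
Qed.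

Lemma tc_eq_cat u u' v v' : tc_eq u v -> tc_eq u' v' -> tc_eq (u ++ u') (v ++ v').
Proof.
move=> [s1 [s2 [t1 t2 H]]] [s1' [s2' [t1' t2' H']]].
exists (s1 ++ s1'), (s2 ++ s2'); split; try exact: tcentral_cat.
rewrite -!catA (catA u') -(proj1 t1 u') -catA H' catA H -catA.
by rewrite (catA s2) (proj1 t2 v') -catA.
Qed.

Lemma tc_eq_letter (a c : Y) s : p a = p c -> tc_eq [:: (a, s)] [:: (c, s)].
Proof.
move=> Hac; case: s.
- exists [:: (a, false); (c, true)], [::].
  split; [exact: tcentral_fiber | exact: tcentral_nil |].
  change (as_eq ([:: (a, true); (a, false)] ++ [:: (c, true)]) ([:: (c, true)] ++ [::])).
  by rewrite letter_mulV cats0.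
- have [k_central _] := tcentral_fiber (esym Hac).
  exists [:: (c, false); (a, true)], [::].
  split; [exact: tcentral_fiber | exact: tcentral_nil |].
  change (as_eq ([:: (a, false)] ++ [:: (c, false); (a, true)]) ([:: (c, false)] ++ [::])).
  rewrite -k_central.
  change (as_eq ([:: (c, false)] ++ [:: (a, true); (a, false)]) ([:: (c, false)] ++ [::])).
  by rewrite letter_mulV.
Qed.

Lemma tc_eq_lift_proj (w : word Y) : tc_eq w (pstar l (pstar p w)).
Proof.
elim: w => [|[y s] w IH]; first exact: as_eq_tc_eq.
change (tc_eq ([:: (y, s)] ++ w) ([:: (l (p y), s)] ++ pstar l (pstar p w))).
by apply: tc_eq_cat => //; apply: tc_eq_letter; rewrite lK.
Qed.

Lemma tc_eq_lift (v v' : word Z) : as_eq v v' -> tc_eq (pstar l v) (pstar l v').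
Proof.
elim=> {v v'}.
- by move=> v; apply: as_eq_tc_eq.
- by move=> w v _; apply: tc_eq_sym.
- by move=> w v u _ H1 _ H2; apply: tc_eq_trans H1 H2.
- by move=> w1 w2 v1 v2 _ H1 _ H2; rewrite /pstar !map_cat; apply: tc_eq_cat.
- by move=> x; apply: as_eq_tc_eq; apply: as_inv_r.
- by move=> x; apply: as_eq_tc_eq; apply: as_inv_l.
- move=> x y; apply: (tc_eq_trans _ (as_eq_tc_eq (as_rel (l x) (l y)))).
  by apply: tc_eq_letter; rewrite p_hom !lK.
Qed.

Lemma tc_eq_nil_wpow (w : word Y) : tc_eq w [::] -> as_eq (wpow w t) [::].
Proof.
move=> [s1 [s2 [[c1 e1] [_ e2] H]]].
have : as_eq (wpow (w ++ s1) t) (wpow s2 t) by rewrite H.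
by rewrite wpow_cat_central // e1 e2 cats0.
Qed.

Lemma ker_wpow_type (w : word Y) : in_ker p w -> as_eq (wpow w t) [::].
Proof.
move=> Hk; apply: tc_eq_nil_wpow.
exact: tc_eq_trans (tc_eq_lift_proj w) (tc_eq_lift Hk).
Qed.

End Torsion.
End Covering.

Theorem proposition5p1 (Y Z : quandle) (p : Y -> Z) (hp : quandle_covering p) :
  (* p_* is a central extension: surjective with central kernel *)
  ((forall v : word Z, exists w : word Y, as_eq (pstar p w) v) /\
   (forall w : word Y, in_ker p w -> forall u : word Y, as_eq (w ++ u) (u ++ w)))
  /\
  (connected Y -> connected Z -> forall t, is_type Z t ->
     forall w : word Y, in_ker p w -> as_eq (flatten (nseq t w)) [::]).
Proof.
have [p_hom [p_surj p_cov]] := hp.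
have [l lK] := surj_section p_surj.
split; first split.
- by move=> v; exists (pstar l v); rewrite pstar_cancel.
- exact: ker_central p_hom p_cov lK.
- move=> Y_connected _ t [_ [t_annihilates_Z _]] w.
  exact: (ker_wpow_type p_hom p_cov lK Y_connected t_annihilates_Z).
Qed.
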